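(* Let $\dot\Theta_\theta$ be a subset of a Hilbert space with inner product $\langle\cdot,\cdot\rangle_\theta$, let $H$ be a Hilbert space, let $A_\theta:\operatorname{lin}\dot\Theta_\theta\to H$ be a continuous linear operator and suppose its adjoint $A_\theta^\star:H\to\overline{\operatorname{lin}}\,\dot\Theta_\theta$ is injective. Let $\mathcal G$ be a dense subspace of $H$. Then $\tilde\chi_\theta\in\overline{\operatorname{lin}}\,\dot\Theta_\theta$ lies in $\operatorname{ran}A_\theta^\star$ if and only if (i) there is a sequence $\chi_n\in A_\theta^\star(\mathcal G)$ with $\chi_n\to\tilde\chi_\theta$ as $n\to\infty$, and (ii) $(A_\theta^\star)^{-1}\chi_n$ converges in $H$ to some $\psi\in H$. In this case $A_\theta^\star\psi=\tilde\chi_\theta$, and $\Pi_{\overline{\operatorname{ran}}A_\theta}\psi=\psi=(A_\theta^\star)^\dagger\tilde\chi_\theta$, i.e. $\psi$ is the efficient influence function.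
   Context: $\Pi_{\overline{\operatorname{ran}}A_\theta}$ denotes the orthogonal projection onto the closure of the range of $A_\theta$. $(A_\theta^\star)^\dagger$ is the Moore–Penrose pseudoinverse: for $\zeta\in\operatorname{ran}A_\theta^\star$, $(A_\theta^\star)^\dagger\zeta$ is the unique element of $(\ker A_\theta^\star)^\perp$ mapped to $\zeta$. In the semiparametric setting where $A_\theta$ is the generalized score operator of a model at $\theta$ and $\tilde\chi_\theta$ is the gradient of a pathwise differentiable parameter, the efficient influence function is $(A_\theta^\star)^\dagger\tilde\chi_\theta$. *)

(* Real Hilbert spaces are modelled as complete normed
   modules over R : realType equipped with an inner product inducing the norm. *)
From HB Require Import structures.
From mathcomp Require Import all_boot all_order all_algebra.
From mathcomp Require Import all_classical all_reals all_analysis.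
Set Implicit Arguments. Unset Strict Implicit. Unset Printing Implicit Defensive.
Import Order.TTheory GRing.Theory Num.Theory.
Import numFieldNormedType.Exports.
Local Open Scope classical_set_scope.
Local Open Scope ring_scope.

Section Defs.
Context {R : realType}.

Definition inner_product (V : normedModType R) (ip : V -> V -> R) : Prop :=
  [/\ (forall x y, ip x y = ip y x),
      (forall (a : R) x y z, ip (a *: x + y) z = a * ip x z + ip y z) &
      (forall x, `|x| = Num.sqrt (ip x x))].

Definition lin (V : normedModType R) (S : set V) : set V :=
  [set x | exists n (a : 'I_n -> R) (v : 'I_n -> V),
     (forall i, S (v i)) /\ x = \sum_(i < n) a i *: v i].

Definition lin_subspace (V : normedModType R) (M : set V) : Prop :=
  M 0 /\ forall (a : R) x y, M x -> M y -> M (a *: x + y).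

Definition linear_on (V W : normedModType R) (D : set V) (f : V -> W) : Prop :=
  forall (a : R) x y, D x -> D y -> f (a *: x + y) = a *: f x + f y.

Definition is_adjoint (V W : normedModType R) (ipV : V -> V -> R)
    (ipW : W -> W -> R) (S : set V) (A : V -> W) (Ast : W -> V) : Prop :=
  (forall h, closure (lin S) (Ast h)) /\
  (forall h x, lin S x -> ipV (Ast h) x = ipW h (A x)).

(* inverse of an injective map f on its range (arbitrary outside the range) *)
Definition inv_fun (W : normedModType R) (V : Type) (f : W -> V) (y : V) : W :=
  get [set h | f h = y].

Definition orth_proj (W : normedModType R) (ip : W -> W -> R) (M : set W)
    (x : W) : W :=
  get [set p | M p /\ forall m, M m -> ip (x - p) m = 0].

Definition pseudoinv (W V : normedModType R) (ip : W -> W -> R) (f : W -> V)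
    (z : V) : W :=
  get [set h | (forall k, f k = 0 -> ip h k = 0) /\ f h = z].

End Defs.

(* Injectivity of A* makes ran A dense: the projection theorem (obtained from a
   minimizing sequence, which is Cauchy by the parallelogram law) leaves a residual
   orthogonal to ran A, and A* kills it.  A* is Lipschitz because A is bounded, so if
   A* g_n = chi_n -> chi and g_n -> psi then A* psi = chi; as closure (ran A) = H and
   ker A* = 0, psi is fixed by the projection and is the pseudoinverse image of chi.
   Conversely, if chi = A* h, approximate h by g_n in the dense set G. *)

From mathcomp Require Import all_boot all_order all_algebra.
From mathcomp Require Import all_classical all_reals all_analysis.
From mathcomp Require Import ring lra.
Import Order.TTheory GRing.Theory Num.Theory.
Import numFieldNormedType.Exports.
Local Open Scope classical_set_scope.
Local Open Scope ring_scope.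

Section InnerProduct.
Context {R : realType} {V : normedModType R} {ip : V -> V -> R}.
Hypothesis ipP : inner_product ip.

Lemma ipC x y : ip x y = ip y x.
Proof. by case: ipP. Qed.

Lemma ipDl x y z : ip (x + y) z = ip x z + ip y z.
Proof. by case: ipP => _ ipL _; rewrite -[x in LHS]scale1r ipL mul1r. Qed.

Lemma ip0l z : ip 0 z = 0.
Proof. by have := ipDl 0 0 z; rewrite addr0 -{1}[ip 0 z]addr0 => /addrI <-. Qed.

Lemma ipZl a x z : ip (a *: x) z = a * ip x z.
Proof. by case: ipP => _ ipL _; rewrite -[a *: x]addr0 ipL ip0l addr0. Qed.

Lemma ipBl x y z : ip (x - y) z = ip x z - ip y z.
Proof. by rewrite ipDl -scaleN1r ipZl mulN1r. Qed.

Lemma ip0r z : ip z 0 = 0.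
Proof. by rewrite ipC ip0l. Qed.

Lemma ipDr x y z : ip z (x + y) = ip z x + ip z y.
Proof. by rewrite ipC ipDl !(ipC z). Qed.

Lemma ipZr a x z : ip z (a *: x) = a * ip z x.
Proof. by rewrite ipC ipZl ipC. Qed.

Lemma ipBr x y z : ip z (x - y) = ip z x - ip z y.
Proof. by rewrite ipC ipBl !(ipC z). Qed.

Lemma ipxx x : ip x x = `|x| ^+ 2.
Proof.
(* [Num.sqrt] vanishes on negative numbers, so [ip x x < 0] has to be excluded separately. *)
case: ipP => _ _ normE; rewrite normE; have [ge0|lt0] := leP 0 (ip x x).
  by rewrite sqr_sqrtr.
have /normr0_eq0 x0 : `|x| = 0 by rewrite normE ltr0_sqrtr.
by move: lt0; rewrite x0 ip0l ltxx.
Qed.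

Lemma ip_le_norm x y : ip x y <= `|x| * `|y|.
Proof.
have eD : `|x + y| ^+ 2 = `|x| ^+ 2 + 2 * ip x y + `|y| ^+ 2.
  by rewrite -!ipxx ipDl !ipDr (ipC y x); ring.
have := ler_normD x y; have := normr_ge0 (x + y).
have := normr_ge0 x; have := normr_ge0 y; nra.
Qed.

Lemma parallelogram (x y : V) :
  `|x + y| ^+ 2 + `|x - y| ^+ 2 = 2 * `|x| ^+ 2 + 2 * `|y| ^+ 2.
Proof. by rewrite -!ipxx ipBl !ipBr ipDl !ipDr (ipC y x); ring. Qed.

Lemma normBZ_sqr (u m : V) t :
  `|u - t *: m| ^+ 2 = `|u| ^+ 2 - 2 * t * ip u m + t ^+ 2 * `|m| ^+ 2.
Proof. by rewrite -!ipxx ipBl !ipBr !ipZl !ipZr (ipC m u); ring. Qed.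

Lemma ip_eq0_of_norm_min (u m : V) :
  (forall t, `|u| <= `|u - t *: m|) -> ip u m = 0.
Proof.
move=> umin; set c := ip u m; set t := c / (`|m| ^+ 2 + 1).
have m0 : 0 < `|m| ^+ 2 + 1 by rewrite ltr_pwDr // sqr_ge0.
have ct : c = t * (`|m| ^+ 2 + 1) by rewrite divfK // gt_eqF.
have : `|u| ^+ 2 <= `|u - t *: m| ^+ 2.
  by rewrite ler_pXn2r ?nnegrE ?normr_ge0.
rewrite normBZ_sqr -/c ct => h.
have t0 : t ^+ 2 <= 0 by have := sqr_ge0 `|m|; nra.
suff -> : t = 0 by rewrite mul0r.
by apply/eqP; rewrite -sqrf_eq0 eq_le t0 sqr_ge0.
Qed.

End InnerProduct.

Section Subspace.
Context {R : realType} {V : normedModType R} {M : set V}.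
Hypothesis MP : lin_subspace M.

Lemma subspace0 : M 0.
Proof. by case: MP. Qed.

Lemma subspaceZ a x : M x -> M (a *: x).
Proof. by case: MP => M0 ML Mx; rewrite -[a *: x]addr0; apply: ML. Qed.

Lemma subspaceD x y : M x -> M y -> M (x + y).
Proof. by case: MP => _ ML Mx My; rewrite -[x]scale1r; apply: ML. Qed.

Lemma subspaceB x y : M x -> M y -> M (x - y).
Proof. by move=> Mx My; rewrite -scaleN1r; apply/subspaceD/subspaceZ. Qed.

End Subspace.

Lemma lin_subspace_lin {R : realType} {V : normedModType R} (S : set V) :
  lin_subspace (lin S).
Proof.
split.
  exists 0%N, (fun _ => 0), (fun _ => 0); split; first by case.
  by rewrite big_ord0.
move=> a _ _ [n [c [v [Sv ->]]]] [m [d [w [Sw ->]]]].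
pose pick T (l : 'I_n -> T) (r : 'I_m -> T) i :=
  match fintype.split i with inl j => l j | inr k => r k end.
exists (n + m)%N, (pick _ (fun j => a * c j) d), (pick _ v w); split.
  by move=> i; rewrite /pick; case: (fintype.split i).
rewrite big_split_ord /= scaler_sumr; congr (_ + _); apply: eq_bigr => i _.
  by rewrite /pick (unsplitK (inl i)) scalerA.
by rewrite /pick (unsplitK (inr i)).
Qed.

Section LinearOn.
Context {R : realType} {V W : normedModType R} {D : set V} {f : V -> W}.
Hypotheses (DP : lin_subspace D) (fP : linear_on D f).

Lemma linear_on0 : f 0 = 0.
Proof.
have := fP 1 0 0 (subspace0 DP) (subspace0 DP).
by rewrite scaler0 addr0 scale1r -{1}[f 0]addr0 => /addrI <-.
Qed.

Lemma linear_onZ a x : D x -> f (a *: x) = a *: f x.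
Proof. by move=> Dx; rewrite -[a *: x]addr0 fP ?linear_on0 ?addr0 //; apply: subspace0. Qed.

Lemma lin_subspace_image : lin_subspace (f @` D).
Proof.
split; first by exists 0; [apply: subspace0 | apply: linear_on0].
move=> a _ _ [x Dx <-] [y Dy <-]; exists (a *: x + y).
  by apply: subspaceD => //; apply: subspaceZ.
by rewrite fP.
Qed.

Lemma linear_on_bounded : {within D, continuous f} ->
  exists2 C, 0 < C & forall x, D x -> `|f x| <= C * `|x|.
Proof.
move=> /subspace_continuousP /(_ 0 (subspace0 DP)) /cvgrPdist_lt /(_ 1 ltr01).
rewrite /within => /nbhs_ballP [d /= d0 fd].
exists (2 / d) => [|x Dx]; first by rewrite divr_gt0.
have [->|x0] := eqVneq x 0; first by rewrite linear_on0 !normr0 mulr0.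
have nx : 0 < `|x| by rewrite normr_gt0.
set s := d / (2 * `|x|).
have s0 : 0 < s by rewrite divr_gt0 // mulr_gt0.
have ns : `|s *: x| = d / 2.
  by rewrite normrZ gtr0_norm // /s; field; rewrite gt_eqF.
have /fd : ball 0 d (s *: x) by rewrite -ball_normE /= sub0r normrN ns; lra.
rewrite /from_subspace linear_on0 sub0r normrN linear_onZ // normrZ gtr0_norm //.
move=> /(_ (subspaceZ DP s x Dx)); rewrite /s mulrAC ltr_pdivrMr ?mulr_gt0 // mul1r.
by rewrite mulrAC ler_pdivlMr // mulrC => /ltW.
Qed.

End LinearOn.

Lemma dense_closure {T : topologicalType} {S : set T} x : dense S -> closure S x.
Proof.
move=> Sd B; rewrite nbhsE => -[U [oU Ux] UB].
have [y [Uy Sy]] := Sd U (ex_intro _ x Ux) oU.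
by exists y; split => //; apply: UB.
Qed.

Section NormedClosure.
Context {R : realType} {V W : normedModType R}.

Lemma closure_normP (S : set V) u :
  closure S u <-> forall e, 0 < e -> exists2 x, S x & `|u - x| < e.
Proof.
split=> [Su e e0|Su B /nbhs_ballP [e /= e0 eB]].
  have [x [Sx]] := Su _ (nbhsx_ballx u _ e0).
  by rewrite -ball_normE; exists x.
by have [x Sx ux] := Su e e0; exists x; split => //; apply: eB; rewrite -ball_normE.
Qed.

Lemma closure_cvg_seq (S : set V) u :
  closure S u -> exists2 s : nat -> V, (forall n, S (s n)) & s @ \oo --> u.
Proof.
move=> /closure_normP Su.
have /choice [s sP] n : exists x, S x /\ `|u - x| < n.+1%:R^-1.
  by have [x Sx ux] := Su _ (harmonic_gt0 n); exists x.
exists s => [n|]; first by case: (sP n).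
apply/cvgrPdist_lt => e e0; near=> n.
apply: lt_trans (proj2 (sP n)) _.
by near: n; exact: (near_infty_natSinv_lt (PosNum e0)).
Unshelve. all: by end_near. Qed.

Lemma closure_subspaceB (M : set V) u v : lin_subspace M ->
  closure M u -> closure M v -> closure M (u - v).
Proof.
move=> MP /closure_normP Mu /closure_normP Mv; apply/closure_normP => e e0.
have e2 : 0 < e / 2 by rewrite divr_gt0.
have [x Mx ux] := Mu _ e2; have [y My vy] := Mv _ e2.
exists (x - y); first exact: subspaceB.
have -> : u - v - (x - y) = (u - x) - (v - y).
  by rewrite !opprB (addrC y (- x)) addrACA (addrC y).
by apply: le_lt_trans (ler_normB _ _) _; lra.
Qed.

Lemma continuous_of_lipschitz {f : V -> W} {C : R} :
  (forall x y, `|f x - f y| <= C * `|x - y|) -> continuous f.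
Proof.
move=> fC x; apply/cvgrPdist_lt => e e0.
have C1 : 0 < `|C| + 1 by rewrite ltr_pwDr.
near=> y; apply: le_lt_trans (fC x y) _.
have CC1 : C <= `|C| + 1 by rewrite (le_trans (ler_norm C)) ?lerDl.
apply: le_lt_trans (ler_wpM2r (normr_ge0 _) CC1) _.
rewrite mulrC -ltr_pdivlMr //; near: y; apply: cvgr_dist_lt => //.
by rewrite divr_gt0.
Unshelve. all: by end_near. Qed.

End NormedClosure.

Section Orthogonality.
Context {R : realType} {V : normedModType R} {ip : V -> V -> R}.
Hypothesis ipP : inner_product ip.

Lemma norm_le_of_ip_le (M : set V) u c : 0 <= c -> closure M u ->
  (forall x, M x -> ip u x <= c * `|x|) -> `|u| <= c.
Proof.
move=> c0 /closure_normP Mu uc; have u0 := normr_ge0 u.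
suff : `|u| * `|u| <= c * `|u| by nra.
apply/ler_addgt0Pr => e e0.
have uc1 : 0 < `|u| + c + 1 by lra.
have [x Mx] := Mu _ (divr_gt0 e0 uc1); rewrite ltr_pdivlMr // => ux.
have ux0 := normr_ge0 (u - x).
have nx : `|x| <= `|u| + `|u - x|.
  by rewrite -[x in `|x|](subKr u) (le_trans (ler_normB _ _)) // distrC.
have : `|u| * `|u| = ip u (u - x) + ip u x.
  by rewrite -expr2 -(ipxx ipP) (ipBr ipP) subrK.
have := ip_le_norm ipP u (u - x); have := uc x Mx; nra.
Qed.

Lemma orth_proj_full (M : set V) x : (forall y, M y) -> orth_proj ip M x = x.
Proof.
move=> MT; rewrite /orth_proj; set P := [set p | _].
have [_ /(_ (x - get P) (MT _))] : P (get P).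
  by apply: getPex; exists x; split => // m _; rewrite subrr (ip0l ipP).
by rewrite (ipxx ipP) => /eqP; rewrite sqrf_eq0 normr_eq0 subr_eq0 => /eqP.
Qed.

End Orthogonality.

Lemma cvg_sqr_norm {R : realType} {V : normedModType R} {u : nat -> V} {l : V} :
  u @ \oo --> l -> (fun n => `|u n| ^+ 2) @ \oo --> `|l| ^+ 2.
Proof.
move=> ul; rewrite expr2; under eq_fun do rewrite expr2.
exact: cvgM (cvg_norm ul) (cvg_norm ul).
Qed.

Section Projection.
Context {R : realType} {W : completeNormedModType R} {ip : W -> W -> R}.
Hypothesis ipP : inner_product ip.
Variables (M : set W) (w : W).
Hypothesis MP : lin_subspace M.

Let dist2 := inf [set `|w - m| ^+ 2 | m in M].

Let dist2_le m : M m -> dist2 <= `|w - m| ^+ 2.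
Proof. by move=> Mm; apply: ge_inf; [exists 0 => _ [x _ <-]; apply: sqr_ge0 | exists m]. Qed.

Let sqr_norm_sub_le a b : M a -> M b ->
  `|a - b| ^+ 2 <= 2 * `|w - a| ^+ 2 + 2 * `|w - b| ^+ 2 - 4 * dist2.
Proof.
move=> Ma Mb; have := parallelogram ipP (w - a) (w - b).
have -> : w - a - (w - b) = b - a.
  by rewrite opprB addrC addrA subrK.
have -> : w - a + (w - b) = 2 *: (w - 2^-1 *: (a + b)).
  rewrite scalerBr scalerA divff ?pnatr_eq0 // scale1r scaler_nat mulr2n.
  by rewrite addrACA opprD.
have Mab : M (2^-1 *: (a + b)) by apply: subspaceZ => //; apply: subspaceD.
have := dist2_le _ Mab; rewrite normrZ ger0_norm // distrC (distrC b); nra.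
Qed.

Let minimizing_cvg (a : nat -> W) : (forall n, M (a n)) ->
  (forall n, `|w - a n| ^+ 2 < dist2 + n.+1%:R^-1) -> cvg (a @ \oo).
Proof.
move=> Ma amin; apply/cauchy_cvgP/cauchy_exP => e e0.
have e4 : 0 < e ^+ 2 / 4 by rewrite divr_gt0 // exprn_gt0.
have [N _ /(_ N (leqnn N)) hN] := near_infty_natSinv_lt (PosNum e4).
exists (a N); exists N => // m /= Nm; rewrite -ball_normE /=.
have hm : m.+1%:R^-1 <= N.+1%:R^-1 :> R by rewrite lef_pV2 ?posrE // ler_nat.
rewrite -(@ltr_pXn2r _ 2) ?nnegrE ?normr_ge0 ?ltW //.
move: hN => /= hN.
have := sqr_norm_sub_le _ _ (Ma N) (Ma m); have := amin N; have := amin m.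
move: (N.+1%:R^-1) (m.+1%:R^-1) hm hN => qN qm hqm hqN; lra.
Qed.

Lemma orthogonal_projection_exists :
  exists2 p, closure M p & forall m, M m -> ip (w - p) m = 0.
Proof.
have Dinf : has_inf [set `|w - m| ^+ 2 | m in M].
  split; first by exists (`|w - 0| ^+ 2), 0; [exact: subspace0|].
  by exists 0 => _ [m _ <-]; apply: sqr_ge0.
have /choice [a aP] n : exists m, M m /\ `|w - m| ^+ 2 < dist2 + n.+1%:R^-1.
  by have [_ [m Mm <-]] := inf_adherent (harmonic_gt0 n) Dinf; exists m.
have Ma n : M (a n) by case: (aP n).
have /cvg_ex [p ap] := minimizing_cvg _ Ma (fun n => (aP n).2).
exists p => [|m Mm].
  apply: closed_cvg ap; first exact: closed_closure.
  by apply: nearW => n; apply: subset_closure.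
apply: (ip_eq0_of_norm_min ipP) => t.
have wp_le : `|w - p| ^+ 2 <= dist2.
  rewrite -[dist2]addr0; apply: ler_cvg_to (cvg_sqr_norm (cvgB (cvg_cst w) ap)) _ _.
    exact: cvgD (cvg_cst _) cvg_harmonic.
  by apply: nearW => n; apply/ltW/(aP n).2.
have wp_ge : dist2 <= `|w - p - t *: m| ^+ 2.
  apply: ler_cvg_to (cvg_cst _) (cvg_sqr_norm (cvgB (cvgB (cvg_cst w) ap) (cvg_cst _))) _.
  apply: nearW => n /=; rewrite -addrA -opprD; apply: dist2_le.
  by apply: subspaceD => //; apply: subspaceZ.
by rewrite -(@ler_pXn2r _ 2) ?nnegrE ?normr_ge0 // (le_trans wp_le).
Qed.

End Projection.

Lemma inv_funK {R : realType} {W : normedModType R} {V : Type} (f : W -> V) :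
  (forall h1 h2, f h1 = f h2 -> h1 = h2) -> forall h, inv_fun f (f h) = h.
Proof. by move=> f_inj h; apply: f_inj; apply: (@getPex _ [set k | f k = f h]); exists h. Qed.

Lemma pseudoinv_injective {R : realType} {W V : normedModType R} {ip : W -> W -> R}
    (f : W -> V) h z : inner_product ip ->
  (forall h1 h2, f h1 = f h2 -> h1 = h2) -> f 0 = 0 -> f h = z -> pseudoinv ip f z = h.
Proof.
move=> ipP f_inj f0 fh; apply: (f_inj); rewrite fh.
apply: (proj2 (@getPex _ [set k | (forall k', f k' = 0 -> ip k k' = 0) /\ f k = z] _)).
exists h; split=> // k; rewrite -f0 => /f_inj ->; exact: ip0r ipP h.
Qed.

Section Adjoint.
Context {R : realType} {V : normedModType R} {W : completeNormedModType R}.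
Context {ipV : V -> V -> R} {ipW : W -> W -> R}.
Context {Theta : set V} {A : V -> W} {Ast : W -> V}.
Hypotheses (ipVP : inner_product ipV) (ipWP : inner_product ipW).
Hypotheses (Alin : linear_on (lin Theta) A) (Acont : {within lin Theta, continuous A}).
Hypothesis Aadj : is_adjoint ipV ipW Theta A Ast.

Lemma adjoint_eq0 h : (forall x, lin Theta x -> ipW h (A x) = 0) -> Ast h = 0.
Proof.
case: Aadj => Ast_cl Ast_ip hA; apply/normr0_eq0/eqP.
rewrite eq_le normr_ge0 andbT; apply: (norm_le_of_ip_le ipVP _ _ _ (lexx 0) (Ast_cl h)).
by move=> x lx; rewrite Ast_ip // hA // mul0r.
Qed.

Lemma adjoint_lipschitz :
  exists2 C, 0 < C & forall h k, `|Ast h - Ast k| <= C * `|h - k|.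
Proof.
case: Aadj => Ast_cl Ast_ip.
have [C C0 AC] := linear_on_bounded (lin_subspace_lin Theta) Alin Acont.
exists C => // h k; apply: (norm_le_of_ip_le ipVP (lin Theta)).
- by rewrite mulr_ge0 ?normr_ge0 ?ltW.
- exact: closure_subspaceB _ _ _ (lin_subspace_lin Theta) (Ast_cl h) (Ast_cl k).
move=> x lx; rewrite (ipBl ipVP) !Ast_ip // -(ipBl ipWP).
apply: le_trans (ip_le_norm ipWP _ _) _.
by rewrite -mulrA mulrCA ler_wpM2l ?normr_ge0 ?AC.
Qed.

Lemma adjoint_continuous : continuous Ast.
Proof. by have [C _ AstC] := adjoint_lipschitz; apply: continuous_of_lipschitz AstC. Qed.

Hypothesis Ast_inj : forall h1 h2, Ast h1 = Ast h2 -> h1 = h2.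

Lemma adjoint_injective_dense_range w : closure (A @` lin Theta) w.
Proof.
case: Aadj => _ Ast_ip.
have [p pcl p_orth] := orthogonal_projection_exists ipWP _ w
  (lin_subspace_image (lin_subspace_lin Theta) Alin).
suff /Ast_inj/eqP : Ast (w - p) = Ast 0 by rewrite subr_eq0 => /eqP ->.
rewrite !adjoint_eq0 // => x lx; first exact: ip0l ipWP _.
by apply: p_orth; exists x.
Qed.

Lemma adjoint_cvg_inverse (chin : nat -> V) chi psi :
  (forall n, range Ast (chin n)) -> chin @ \oo --> chi ->
  (fun n => inv_fun Ast (chin n)) @ \oo --> psi ->
  [/\ Ast psi = chi, orth_proj ipW (closure (A @` lin Theta)) psi = psi &
      psi = pseudoinv ipW Ast chi].
Proof.
move=> chin_range chin_chi inv_psi.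
have chin_Ast_psi : chin @ \oo --> Ast psi.
  have -> : chin = Ast \o (fun n => inv_fun Ast (chin n)).
    by apply/funext => n /=; have [g _ <-] := chin_range n; rewrite inv_funK.
  exact: continuous_cvg _ (adjoint_continuous psi) inv_psi.
have Ast_psi : Ast psi = chi by exact: norm_cvg_unique chin_Ast_psi chin_chi.
have Ast0 : Ast 0 = 0 by apply: adjoint_eq0 => x _; exact: ip0l ipWP _.
split.
- exact: Ast_psi.
- exact: orth_proj_full ipWP _ psi adjoint_injective_dense_range.
- by rewrite (pseudoinv_injective _ _ _ ipWP Ast_inj Ast0 Ast_psi).
Qed.

End Adjoint.

Theorem proposition2p11 (R : realType)
  (V : completeNormedModType R) (ipV : V -> V -> R)
  (W : completeNormedModType R) (ipW : W -> W -> R)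
  (Theta : set V) (A : V -> W) (Ast : W -> V) (G : set W) (chi : V) :
  inner_product ipV -> inner_product ipW ->
  linear_on (lin Theta) A ->
  {within lin Theta, continuous A} ->
  is_adjoint ipV ipW Theta A Ast ->
  (forall h1 h2, Ast h1 = Ast h2 -> h1 = h2) ->
  lin_subspace G -> dense G ->
  closure (lin Theta) chi ->
  ((exists h, Ast h = chi) <->
   (exists (chin : nat -> V) (psi : W),
      (forall n, (Ast @` G) (chin n)) /\
      chin @ \oo --> chi /\
      (fun n => inv_fun Ast (chin n)) @ \oo --> psi)) /\
  (forall (chin : nat -> V) (psi : W),
      (forall n, (Ast @` G) (chin n)) ->
      chin @ \oo --> chi ->
      (fun n => inv_fun Ast (chin n)) @ \oo --> psi ->
      [/\ Ast psi = chi,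
          orth_proj ipW (closure (A @` lin Theta)) psi = psi &
          psi = pseudoinv ipW Ast chi]).
Proof.
move=> ipVP ipWP Alin Acont Aadj Ast_inj _ G_dense _.
have Ast_cont := adjoint_continuous ipVP ipWP Alin Acont Aadj.
have cvg_inv := adjoint_cvg_inverse ipVP ipWP Alin Acont Aadj Ast_inj.
have G_range chin : (forall n, (Ast @` G) (chin n)) -> forall n, range Ast (chin n).
  by move=> Gchin n; have [g _ <-] := Gchin n; exists g.
split=> [|chin psi /G_range]; last exact: cvg_inv.
split=> [[h <-]|[chin [psi [/G_range chin_range [chin_chi inv_psi]]]]]; last first.
  by exists psi; case: (cvg_inv _ _ _ chin_range chin_chi inv_psi).
have [g Gg gh] := closure_cvg_seq _ _ (dense_closure h G_dense).
exists (Ast \o g), h; split; first by move=> n; exists (g n).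
split; first exact: continuous_cvg _ (Ast_cont h) gh.
by under eq_fun do rewrite /= inv_funK //.
Qed.
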